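(* For any positive numbers $c_1,c_2$, any $t\ge0$, and any nonnegative numbers $B_0,B_1,\dots,B_t$, \[ c_1\sqrt{\sum_{k=0}^tB_k^2}-\sum_{k=0}^t\frac{B_k^2}{c_2}\sqrt{\sum_{j=0}^kB_j^2}\le 2c_1^{3/2}c_2^{1/2}. \] *)

From mathcomp Require Import all_boot all_order all_algebra.

From mathcomp Require Import all_boot all_order all_algebra.
From mathcomp Require Import ring lra.

Set Implicit Arguments.
Unset Strict Implicit.
Unset Printing Implicit Defensive.

Import Order.TTheory GRing.Theory Num.Theory.
Local Open Scope ring_scope.

(* Let s_k be the square root of the k-th partial sum of the B_j ^ 2, so that
   B_k ^ 2 = s_(k+1) ^ 2 - s_k ^ 2 and the subtracted sum is
   \sum_k (s_(k+1) ^ 2 - s_k ^ 2) s_(k+1) / c2. Termwise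
   a ^ 3 - b ^ 3 <= 2 (a ^ 2 - b ^ 2) a for 0 <= b <= a, so by telescoping this
   sum is at least s ^ 3 / (2 c2), with s = s_(t+1). Finally
   c1 s - s ^ 3 / (2 c2) <= 2 c1 ^ (3/2) c2 ^ (1/2) for every s >= 0: with
   w = sqrt (c1 c2) this is the cubic inequality 2 w ^ 2 s <= s ^ 3 + 4 w ^ 3. *)

Lemma cube_diff_le (R : realDomainType) (a b : R) :
  0 <= b -> b <= a -> a ^+ 3 - b ^+ 3 <= 2 * (a ^+ 2 - b ^+ 2) * a.
Proof.
move=> b_ge0 le_ba; have a_ge0 := le_trans b_ge0 le_ba.
(* 2 (a^2 - b^2) a - (a^3 - b^3) = (a + b) (a - b)^2 + a b (a - b) *)
have : 0 <= (a + b) * (a - b) ^+ 2 by rewrite mulr_ge0 ?addr_ge0 ?sqr_ge0.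
have : 0 <= a * b * (a - b) by rewrite !mulr_ge0 // subr_ge0.
lra.
Qed.

Lemma cube_diff_le_sum (R : realDomainType) (s : nat -> R) (n : nat) :
  0 <= s 0%N -> (forall k, s k <= s k.+1) ->
  s n ^+ 3 - s 0%N ^+ 3 <= 2 * \sum_(0 <= k < n) (s k.+1 ^+ 2 - s k ^+ 2) * s k.+1.
Proof.
move=> s0_ge0 s_incr.
have s_ge0 k : 0 <= s k by elim: k => // k IHk; apply: le_trans (s_incr k).
rewrite -(telescope_sumr (fun k => s k ^+ 3) (leq0n n)) mulr_sumr.
by apply: ler_sum => k _; rewrite mulrA cube_diff_le.
Qed.

Lemma cube_sqrt_sum_sqr_le (R : rcfType) (B : nat -> R) (n : nat) :
  Num.sqrt (\sum_(0 <= j < n) B j ^+ 2) ^+ 3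
  <= 2 * \sum_(0 <= k < n) B k ^+ 2 * Num.sqrt (\sum_(0 <= j < k.+1) B j ^+ 2).
Proof.
pose s k := Num.sqrt (\sum_(0 <= j < k) B j ^+ 2).
have sum_ge0 k : 0 <= \sum_(0 <= j < k) B j ^+ 2.
  by rewrite big_nat_cond; apply: sumr_ge0 => j _; apply: sqr_ge0.
have sqr_s k : s k ^+ 2 = \sum_(0 <= j < k) B j ^+ 2 by rewrite sqr_sqrtr.
have s0 : s 0%N = 0 by rewrite /s big_geq // sqrtr0.
have s_incr k : s k <= s k.+1.
  by rewrite ler_sqrt // big_nat_recr //= lerDl sqr_ge0.
have := @cube_diff_le_sum _ s n (sqrtr_ge0 _) s_incr.
rewrite -/(s n) s0 expr0n subr0.
by under eq_bigr => k _ do rewrite !sqr_s big_nat_recr //= addrAC subrr add0r.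
Qed.

Lemma cubic_ge (R : realFieldType) (s w : R) :
  0 <= s -> 0 <= w -> 2 * w ^+ 2 * s <= s ^+ 3 + 4 * w ^+ 3.
Proof.
move=> s_ge0 w_ge0.
(* s^3 + 4 w^3 - 2 w^2 s = s (s - w)^2 + w (4 s - 3 w)^2 / 8 + 23 w^3 / 8 *)
have := mulr_ge0 s_ge0 (sqr_ge0 (s - w)).
have := mulr_ge0 w_ge0 (sqr_ge0 (4 * s - 3 * w)).
have := exprn_ge0 3 w_ge0.
lra.
Qed.

Lemma sub_cube_le (R : rcfType) (c1 c2 s : R) :
  0 < c1 -> 0 < c2 -> 0 <= s ->
  c1 * s - s ^+ 3 / (2 * c2) <= 2 * Num.sqrt c1 ^+ 3 * Num.sqrt c2.
Proof.
move=> c1_gt0 c2_gt0 s_ge0.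
set u := Num.sqrt c1; set v := Num.sqrt c2.
have u_gt0 : 0 < u by rewrite sqrtr_gt0.
have v_gt0 : 0 < v by rewrite sqrtr_gt0.
have -> : c1 = u ^+ 2 by rewrite sqr_sqrtr // ltW.
have -> : c2 = v ^+ 2 by rewrite sqr_sqrtr // ltW.
rewrite -(ler_pM2r (_ : 0 < 2 * v ^+ 2)) ?mulr_gt0 ?exprn_gt0 //.
have -> : (u ^+ 2 * s - s ^+ 3 / (2 * v ^+ 2)) * (2 * v ^+ 2)
  = 2 * (u * v) ^+ 2 * s - s ^+ 3 by field; rewrite gt_eqF.
have -> : 2 * u ^+ 3 * v * (2 * v ^+ 2) = 4 * (u * v) ^+ 3 by ring.
by rewrite lerBlDr addrC cubic_ge // ltW // mulr_gt0.
Qed.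

Theorem lemma27 (R : rcfType) (c1 c2 : R) (t : nat) (B : nat -> R) :
  0 < c1 -> 0 < c2 -> (forall k, (k <= t)%N -> 0 <= B k) ->
  c1 * Num.sqrt (\sum_(0 <= k < t.+1) B k ^+ 2)
  - \sum_(0 <= k < t.+1) (B k ^+ 2 / c2) * Num.sqrt (\sum_(0 <= j < k.+1) B j ^+ 2)
  <= 2 * (Num.sqrt c1) ^+ 3 * Num.sqrt c2.
Proof.
(* The sign of B is irrelevant: only its squares occur. *)
move=> c1_gt0 c2_gt0 _.
set s := Num.sqrt (\sum_(0 <= k < t.+1) B k ^+ 2).
set G := \sum_(0 <= k < t.+1) B k ^+ 2 * Num.sqrt (\sum_(0 <= j < k.+1) B j ^+ 2).
have -> : \sum_(0 <= k < t.+1) (B k ^+ 2 / c2) * Num.sqrt (\sum_(0 <= j < k.+1) B j ^+ 2)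
    = G / c2.
  by rewrite mulr_suml; apply: eq_bigr => k _; rewrite mulrAC.
apply: le_trans _ (sub_cube_le c1_gt0 c2_gt0 (sqrtr_ge0 _ : 0 <= s)).
rewrite lerD2l lerN2 invfM mulrA ler_pM2r ?invr_gt0 // ler_pdivrMr // mulrC.
exact: cube_sqrt_sum_sqr_le.
Qed.
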